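(* Let $A\in\mathbb{R}^{n\times n}$ be monotone, let $A=P_1-R_1+S_1$ be a double weak regular splitting and $A=P_2-R_2+S_2$ a double regular splitting of $A$. Suppose $1\notin\sigma(S_2P_1^{-1})$, $-1\notin\sigma(R_2P_1^{-1})$, $\widehat{A}^{-1}\geq 0$ and $\widehat{\mathcal{A}}^{-1}\geq 0$, where $\widehat{A}=(I-S_2P_1^{-1})A$ and $\widehat{\mathcal{A}}=(I+R_2P_1^{-1})A$. Let $\widehat{P}=\widehat{\mathcal{P}}=P_2$, $\widehat{R}=R_2-S_2P_1^{-1}R_1$ and $\widehat{\mathcal{R}}=R_2P_1^{-1}R_1-S_2$. If $\widehat{\mathcal{P}}^{-1}\widehat{\mathcal{R}}\geq\widehat{P}^{-1}\widehat{R}$ and $\widehat{\mathcal{P}}^{-1}\widehat{\mathcal{A}}\geq\widehat{P}^{-1}\widehat{A}$, then $\rho(\mathcal{W}_{12})\leq\rho(W_{12})<1$, where $$W_{12}=\begin{pmatrix} P_2^{-1}R_2-P_2^{-1}S_2P_1^{-1}R_1 & P_2^{-1}S_2P_1^{-1}S_1\\ I & 0\end{pmatrix},\qquad \mathcal{W}_{12}=\begin{pmatrix} P_2^{-1}R_2P_1^{-1}R_1-P_2^{-1}S_2 & -P_2^{-1}R_2P_1^{-1}S_1\\ I & 0\end{pmatrix}.$$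
   Context: Inequalities are entrywise; $\rho$ is the spectral radius, $\sigma$ the spectrum. $A$ is monotone if $A$ is nonsingular and $A^{-1}\geq 0$. A double splitting $A=P-R+S$ with $P$ nonsingular is a double regular splitting if $P^{-1}\geq0$, $R\geq0$, $S\leq0$, and a double weak regular splitting if $P^{-1}\geq 0$, $P^{-1}R\geq0$, $P^{-1}S\leq0$. *)

From HB Require Import structures.
From mathcomp Require Import all_boot all_order all_algebra.
From mathcomp Require Import complex.
From mathcomp Require Import reals.
Set Implicit Arguments. Unset Strict Implicit. Unset Printing Implicit Defensive.
Import Order.TTheory GRing.Theory Num.Theory.
Local Open Scope ring_scope.

Section Defs.
Variable R : realType.

Definition mxle (m n : nat) (A B : 'M[R]_(m, n)) : Prop :=
  forall i j, A i j <= B i j.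

Definition monotone (n : nat) (A : 'M[R]_n) : Prop :=
  A \in unitmx /\ mxle 0 (invmx A).

Definition double_regular_splitting (n : nat) (A P Rm S : 'M[R]_n) : Prop :=
  [/\ A = P - Rm + S, P \in unitmx, mxle 0 (invmx P), mxle 0 Rm & mxle S 0].

Definition double_weak_regular_splitting (n : nat) (A P Rm S : 'M[R]_n) : Prop :=
  [/\ A = P - Rm + S, P \in unitmx, mxle 0 (invmx P),
      mxle 0 (invmx P *m Rm) & mxle (invmx P *m S) 0].

Definition cmx (n : nat) (A : 'M[R]_n) : 'M[R[i]]_n :=
  map_mx (fun x => (x%:C)%C) A.

Definition in_spectrum (n : nat) (A : 'M[R]_n) (z : R[i]) : Prop :=
  eigenvalue (cmx A) z.

(* the list of complex eigenvalues of A, with multiplicity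
   (roots of the characteristic polynomial over the algebraic closure) *)
Definition eigen_seq (n : nat) (A : 'M[R]_n) : seq R[i] :=
  sval (closed_field_poly_normal (char_poly (cmx A))).

(* spectral radius: the maximal modulus of an eigenvalue (0 if n = 0) *)
Definition spectral_radius (n : nat) (A : 'M[R]_n) : R :=
  \big[Num.max/0]_(z <- eigen_seq A) complex.Re `|z|.

End Defs.

From HB Require Import structures.
From mathcomp Require Import all_boot all_order all_algebra.
From mathcomp Require Import complex reals.
From mathcomp Require Import polyrcf boolp classical_sets ring lra.
Set Implicit Arguments. Unset Strict Implicit. Unset Printing Implicit Defensive.
Import Order.TTheory GRing.Theory Num.Theory.
Import ComplexField.Normc.
Local Open Scope ring_scope.

(* Both iteration matrices are companion matrices [[M, N], [I, 0]] with M, N >= 0,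
   and P2^-1 Ahat = I - Mhat - Nhat, P2^-1 Acal = I - Mcal - Ncal.
   For B >= 0, the moduli of an eigenvector for an eigenvalue of maximal modulus
   give z >= 0, z <> 0, with rho(B) z <= z B; conversely any such z with
   l z <= z B forces l <= rho(B) (Collatz-Wielandt), because (l I - B)^-1 >= 0
   for l > rho(B).  That resolvent positivity holds for large l by diagonal
   dominance, and persists down to rho(B): the set of good l is closed by
   continuity of adj(l I - B) det(l I - B) and open to the left by the
   resolvent identity.
   If rho(W) >= 1, the subeigenvector (u, v) of W yields u P2^-1 Ahat <= 0, hence
   u P2^-1 <= 0 since Ahat^-1 >= 0, so u = 0.  For the comparison, if l = rho(Wcal)
   and (u, v) is a subeigenvector of Wcal, then (u, l^-1 u Nhat) is one of What
   for l, since Mhat <= Mcal, Mcal + Ncal <= Mhat + Nhat and l <= 1. *)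

Section NonnegativeMatrices.
Variable R : realType.

Lemma mxle0E m n (A : 'M[R]_(m, n)) : mxle 0 A <-> forall i j, 0 <= A i j.
Proof. by split=> h i j; move: (h i j); rewrite mxE. Qed.

Lemma mxle_subr m n (A B : 'M[R]_(m, n)) : mxle A B <-> mxle 0 (B - A).
Proof. by split=> h i j; move: (h i j); rewrite !mxE subr_ge0. Qed.

Lemma mxle_anti m n (A B : 'M[R]_(m, n)) : mxle A B -> mxle B A -> A = B.
Proof. by move=> AB BA; apply/matrixP => i j; apply: le_anti; rewrite AB BA. Qed.

Lemma addmx_ge0 m n (A B : 'M[R]_(m, n)) :
  mxle 0 A -> mxle 0 B -> mxle 0 (A + B).
Proof. by move=> /mxle0E A0 /mxle0E B0; apply/mxle0E => i j; rewrite mxE addr_ge0. Qed.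

Lemma oppmx_ge0 m n (A : 'M[R]_(m, n)) : mxle A 0 -> mxle 0 (- A).
Proof. by move/mxle_subr; rewrite sub0r. Qed.

Lemma mulmx_ge0 m n p (A : 'M[R]_(m, n)) (B : 'M[R]_(n, p)) :
  mxle 0 A -> mxle 0 B -> mxle 0 (A *m B).
Proof.
move=> /mxle0E A0 /mxle0E B0; apply/mxle0E => i j; rewrite mxE.
by apply: sumr_ge0 => k _; apply: mulr_ge0.
Qed.

Lemma mulmx_le0 m n p (A : 'M[R]_(m, n)) (B : 'M[R]_(n, p)) :
  mxle A 0 -> mxle 0 B -> mxle (A *m B) 0.
Proof.
by move=> /oppmx_ge0 NA0 /(mulmx_ge0 NA0); rewrite mulNmx -sub0r -mxle_subr.
Qed.

Lemma ler_mulmx2l m n p (A : 'M[R]_(m, n)) (B C : 'M[R]_(n, p)) :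
  mxle 0 A -> mxle B C -> mxle (A *m B) (A *m C).
Proof. by move=> A0 /mxle_subr BC; apply/mxle_subr; rewrite -mulmxBr; apply: mulmx_ge0. Qed.

Lemma rV_neq0 (V : nmodType) n (v : 'rV[V]_n) : v != 0 -> exists i, v 0 i != 0.
Proof.
move=> v0; apply/existsP; apply: contraNT v0; rewrite negb_exists => /forallP v0.
by apply/eqP/matrixP => i j; rewrite ord1 mxE; apply/eqP; move: (v0 j); rewrite negbK.
Qed.

Section DiagonalDominance.
Variables (n : nat) (B : 'M[R]_n) (s : R).
Hypotheses (B0 : mxle 0 B) (rowsum_lt : forall i, \sum_j B i j < s).

Lemma rowsum_lt_unitmx : (s%:M - B) \in unitmx.
Proof.
have /mxle0E B0' := B0.
rewrite unitmxE unitfE -det_tr; apply/negP => /det0P [v v0 kerv].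
have [i0 vi0_neq0] := rV_neq0 v0.
have [i _ vi_max] := @arg_maxP _ _ _ i0 predT (fun k => `|v 0 k|) isT.
have vi0 : 0 < `|v 0 i|.
  by apply: lt_le_trans (vi_max i0 isT); rewrite normr_gt0.
have eig : s * v 0 i = \sum_k v 0 k * B i k.
  move: kerv; rewrite linearB /= tr_scalar_mx mulmxBr mul_mx_scalar => /eqP.
  rewrite subr_eq0 => /eqP /matrixP /(_ 0 i); rewrite !mxE => ->.
  by apply: eq_bigr => k _; rewrite mxE.
have s0 : 0 < s by apply: le_lt_trans (rowsum_lt i); apply: sumr_ge0.
have : s * `|v 0 i| <= (\sum_k B i k) * `|v 0 i|.
  rewrite -(ger0_norm (ltW s0)) -normrM eig mulr_suml.
  apply: le_trans (ler_norm_sum _ _ _) _; apply: ler_sum => k _.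
  by rewrite normrM (ger0_norm (B0' _ _)) mulrC ler_wpM2l //; apply: vi_max.
by rewrite ler_pM2r // leNgt rowsum_lt.
Qed.

Lemma rowsum_lt_monotone : monotone (s%:M - B).
Proof.
have /mxle0E B0' := B0.
split; first exact: rowsum_lt_unitmx.
apply/mxle0E => i j; set Z := invmx (s%:M - B).
have fixZ : s *: Z = 1%:M + B *m Z.
  have := mulmxV rowsum_lt_unitmx; rewrite -/Z mulmxBl mul_scalar_mx => /eqP.
  by rewrite subr_eq => /eqP ->; rewrite addrC.
have [k _ Zk_min] := @arg_minP _ _ _ j predT (fun k => Z k j) isT.
apply: le_trans (Zk_min i isT) => /=.
have : Z k j * \sum_l B k l <= s * Z k j.
  move/matrixP: fixZ => /(_ k j); rewrite !mxE => ->.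
  rewrite mulr_sumr -[X in X <= _]add0r; apply: lerD; first by case: eqP.
  by apply: ler_sum => l _; rewrite mulrC ler_wpM2l // Zk_min.
rewrite -subr_ge0 (mulrC s) -mulrBr.
by rewrite pmulr_lge0 // subr_gt0.
Qed.

End DiagonalDominance.

Lemma char_poly_mx_horner n (B : 'M[R]_n) s :
  map_mx (horner_eval s) (char_poly_mx B) = s%:M - B.
Proof.
rewrite /char_poly_mx map_mxB map_scalar_mx /= horner_evalE hornerX; congr (_ - _).
by apply/matrixP => i j; rewrite !mxE horner_evalE hornerC.
Qed.

Lemma char_poly_horner n (B : 'M[R]_n) s : (char_poly B).[s] = \det (s%:M - B).
Proof. by rewrite -horner_evalE /char_poly -det_map_mx char_poly_mx_horner. Qed.

Lemma mem_eigen_seq n (B : 'M[R]_n) z :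
  (z \in eigen_seq B) = root (char_poly (cmx B)) z.
Proof.
rewrite /eigen_seq; case: closed_field_poly_normal => r /= ->.
by rewrite rootZ ?root_prod_XsubC // (monicP (char_poly_monic _)) oner_eq0.
Qed.

Lemma spectral_radius_ge0 n (B : 'M[R]_n) : 0 <= spectral_radius B.
Proof. exact: bigmax_ge_id. Qed.

Lemma eigen_seq_le_rho n (B : 'M[R]_n) z :
  z \in eigen_seq B -> complex.Re `|z| <= spectral_radius B.
Proof. by move=> zB; apply: (le_bigmax_seq _ _ xpredT _ zB). Qed.

Lemma real_root_le_rho n (B : 'M[R]_n) s :
  root (char_poly B) s -> `|s| <= spectral_radius B.
Proof.
move=> Bs; have -> : `|s| = complex.Re `|(s%:C)%C|.
  by rewrite normc_def /= expr0n /= addr0 sqrtr_sqr.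
apply: eigen_seq_le_rho; rewrite mem_eigen_seq.
by rewrite -[cmx B]/(map_mx (real_complex R) B) -map_char_poly /root horner_map (eqP Bs) rmorph0.
Qed.

Lemma unitmx_subr_gt_rho n (B : 'M[R]_n) s :
  spectral_radius B < s -> (s%:M - B) \in unitmx.
Proof.
move=> rho_s; rewrite unitmxE unitfE -char_poly_horner.
apply: contraTN rho_s => /real_root_le_rho s_le; rewrite -leNgt.
exact: le_trans (ler_norm s) s_le.
Qed.

Lemma horner_adj_char_poly_mx n (B : 'M[R]_n) s i j : (s%:M - B) \in unitmx ->
  (\adj (char_poly_mx B) i j).[s] = invmx (s%:M - B) i j * (char_poly B).[s].
Proof.
move=> unitB; have det_neq0 : \det (s%:M - B) != 0 by rewrite -unitfE -unitmxE.
have adjE : \adj (s%:M - B) = map_mx (horner_eval s) (\adj (char_poly_mx B)).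
  by rewrite map_mx_adj char_poly_mx_horner.
rewrite char_poly_horner /invmx unitB adjE !mxE horner_evalE.
by rewrite mulrAC mulVf // mul1r.
Qed.

Lemma resolvent_ge0_closed n (B : 'M[R]_n) s : spectral_radius B < s ->
  (forall u, s < u -> mxle 0 (invmx (u%:M - B))) -> mxle 0 (invmx (s%:M - B)).
Proof.
move=> rho_s above; apply/mxle0E => i j; rewrite leNgt; apply/negP => Xij_neg.
(* [g] is a polynomial with the sign of the (i, j) resolvent entry. *)
pose g := \adj (char_poly_mx B) i j * char_poly B.
have gE u : s <= u -> g.[u] = invmx (u%:M - B) i j * (char_poly B).[u] ^+ 2.
  move=> s_u; have unitB := unitmx_subr_gt_rho (lt_le_trans rho_s s_u).
  by rewrite hornerM horner_adj_char_poly_mx // -mulrA -expr2.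
have q_neq0 : (char_poly B).[s] != 0.
  by rewrite char_poly_horner -unitfE -unitmxE unitmx_subr_gt_rho.
have gs_neg : g.[s] < 0 by rewrite gE // pmulr_llt0 // exprn_even_gt0.
have [d d0 near_s] : exists2 d, 0 < d & forall u, `|u - s| < d -> `|g.[u] - g.[s]| < - g.[s].
  by apply: poly_cont; rewrite oppr_gt0.
pose u := s + d / 2.
have s_u : s < u by rewrite /u; lra.
have gu_ge0 : 0 <= g.[u].
  rewrite (gE u (ltW s_u)); apply: mulr_ge0; last exact: sqr_ge0.
  by move/mxle0E: (above u s_u); apply.
have u_near : `|u - s| < d by rewrite ger0_norm /u; lra.
by have := near_s u u_near; rewrite ltr_norml; lra.
Qed.

Lemma resolvent_ge0_shift n (B : 'M[R]_n) s h :
  (s%:M - B) \in unitmx -> mxle 0 (invmx (s%:M - B)) -> 0 <= h ->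
  h * \sum_i \sum_j invmx (s%:M - B) i j < 1 ->
  mxle 0 (invmx ((s - h)%:M - B)).
Proof.
set X := invmx _ => unitB /mxle0E X0 h0 small.
have [unitY Y0] : monotone (1%:M - h *: X).
  apply: rowsum_lt_monotone => [|i]; first by apply/mxle0E => i j; rewrite mxE mulr_ge0.
  under eq_bigr do rewrite mxE; rewrite -mulr_sumr; apply: le_lt_trans small.
  rewrite ler_wpM2l // [leRHS](bigD1 i) //= lerDl.
  by apply: sumr_ge0 => k _; apply: sumr_ge0.
have factor : (s - h)%:M - B = (s%:M - B) *m (1%:M - h *: X).
  rewrite mulmxBr mulmx1 -scalemxAr mulmxV // scalemx1 raddfB /=.
  by rewrite addrAC.
have unitBh : ((s - h)%:M - B) \in unitmx by rewrite factor unitmx_mul unitB.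
suff -> : invmx ((s - h)%:M - B) = invmx (1%:M - h *: X) *m X.
  by apply: mulmx_ge0 => //; apply/mxle0E.
rewrite -[RHS](mulKmx unitBh) factor -mulmxA (mulmxA (1%:M - _)).
by rewrite mulmxV // mul1mx mulmxV // mulmx1.
Qed.

Lemma monotone_subr_gt_rho n (B : 'M[R]_n) s :
  mxle 0 B -> spectral_radius B < s -> monotone (s%:M - B).
Proof.
move=> B0 rho_s; split; first exact: unitmx_subr_gt_rho.
have /mxle0E B0' := B0.
pose K := 1 + \sum_i \sum_j B i j.
have large u : K <= u -> mxle 0 (invmx (u%:M - B)).
  move=> Ku; apply: (rowsum_lt_monotone B0 _).2 => i; apply: lt_le_trans Ku.
  have : 0 <= \sum_(k | k != i) \sum_j B k j by apply: sumr_ge0 => k _; apply: sumr_ge0.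
  by rewrite /K [X in _ < 1 + X](bigD1 i) //=; lra.
(* Otherwise take the supremum of the [u >= s] whose resolvent is not nonnegative. *)
apply: contrapT => bad_s.
pose E : set R := fun u => s <= u /\ ~ mxle 0 (invmx (u%:M - B)).
have supE : has_sup E.
  split; first by exists s.
  by exists K => u [_ bad_u]; rewrite leNgt; apply/negP => /ltW /large.
pose sg := sup E.
have s_sg : s <= sg by apply: sup_upper_bound.
have rho_sg : spectral_radius B < sg := lt_le_trans rho_s s_sg.
have X0 : mxle 0 (invmx (sg%:M - B)).
  apply: resolvent_ge0_closed rho_sg _ => u sg_u; apply: contrapT => bad_u.
  have /(sup_upper_bound supE) : E u by split => //; apply: le_trans (ltW sg_u).
  by rewrite leNgt sg_u.
pose T := \sum_i \sum_j invmx (sg%:M - B) i j.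
have T0 : 0 <= T by apply: sumr_ge0 => i _; apply: sumr_ge0 => j _; move/mxle0E: X0.
have T1_inv_gt0 : 0 < (1 + T)^-1 by rewrite invr_gt0; lra.
have [e Ee] := sup_adherent T1_inv_gt0 supE; rewrite -/sg => sg_e.
have e_sg : e <= sg := sup_upper_bound supE Ee.
apply: Ee.2; rewrite -[e](subKr sg).
apply: resolvent_ge0_shift (unitmx_subr_gt_rho rho_sg) X0 _ _; first by rewrite subr_ge0.
have : (sg - e) * (1 + T) < 1 by rewrite -ltr_pdivlMr ?mul1r; lra.
rewrite -/T; nra.
Qed.

Lemma collatz_wielandt n (B : 'M[R]_n) (z : 'rV[R]_n) l :
  mxle 0 B -> mxle 0 z -> z != 0 -> mxle (l *: z) (z *m B) ->
  l <= spectral_radius B.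
Proof.
move=> B0 z0 z_neq0 lz_le; rewrite leNgt; apply/negP => rho_l.
have [unitB inv0] := monotone_subr_gt_rho B0 rho_l.
have : mxle (z *m (l%:M - B)) 0.
  rewrite mulmxBr mul_mx_scalar; apply/mxle_subr; rewrite sub0r opprB.
  by move/mxle_subr: lz_le.
move=> /mulmx_le0 /(_ inv0); rewrite mulmxK // => z_le0.
by move: z_neq0; rewrite (mxle_anti z_le0 z0) eqxx.
Qed.

Lemma bigmax_seq_attained (T : eqType) (r : seq T) (F : T -> R) :
  0 < \big[Num.max/0]_(y <- r) F y ->
  exists2 y, y \in r & F y = \big[Num.max/0]_(y <- r) F y.
Proof.
elim: r => [|a r IHr]; first by rewrite big_nil ltxx.
rewrite big_cons {1 3}/Order.max; case: ifP => _.
  by move=> /IHr [y yr Fy]; exists y; rewrite ?inE ?yr ?orbT.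
by exists a; rewrite ?inE ?eqxx.
Qed.

Lemma Re_normc (w : R[i]) : complex.Re `|w| = normc w.
Proof. by case: w => a b; rewrite normc_def. Qed.

Lemma normc_ge0 (w : R[i]) : 0 <= normc w.
Proof. by case: w => a b /=; apply: sqrtr_ge0. Qed.

Lemma normc_real (x : R) : normc (x%:C)%C = `|x|.
Proof. by rewrite /= expr0n /= addr0 sqrtr_sqr. Qed.

Lemma normc_sum n (f : 'I_n -> R[i]) : normc (\sum_i f i) <= \sum_i normc (f i).
Proof.
elim/big_ind2 : _ => [|x1 y1 x2 y2 le1 le2|//]; first by rewrite normc0.
exact: le_trans (le_normcD _ _) (lerD le1 le2).
Qed.

Lemma rho_subeigenvector n (B : 'M[R]_n) : mxle 0 B -> 0 < spectral_radius B ->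
  exists a : 'rV[R]_n,
    [/\ mxle 0 a, a != 0 & mxle (spectral_radius B *: a) (a *m B)].
Proof.
move=> /mxle0E B0 rho_gt0.
have [z zB rhoE] := bigmax_seq_attained rho_gt0; rewrite -/(spectral_radius B) in rhoE.
have /eigenvalueP [v vB v_neq0] : eigenvalue (cmx B) z.
  by rewrite eigenvalue_root_char -mem_eigen_seq.
exists (\row_j normc (v 0 j)); split.
- by apply/mxle0E => i j; rewrite mxE normc_ge0.
- have [i vi_neq0] := rV_neq0 v_neq0; apply: contraNneq vi_neq0.
  by move=> /matrixP /(_ 0 i); rewrite !mxE => /eq0_normc ->.
- move=> i j; rewrite !mxE -rhoE Re_normc -normcM.
  have -> : z * v 0 j = (v *m cmx B) 0 j by rewrite vB mxE.
  rewrite mxE; apply: le_trans (normc_sum _) _; apply: ler_sum => k _.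
  by rewrite !mxE normcM normc_real ger0_norm.
Qed.

Definition companion n (M N : 'M[R]_n) : 'M[R]_(n + n) := block_mx M N 1%:M 0.

Lemma mxle_row_mx m n1 n2 (a c : 'M[R]_(m, n1)) (b d : 'M[R]_(m, n2)) :
  mxle (row_mx a b) (row_mx c d) <-> mxle a c /\ mxle b d.
Proof.
split=> [le_ac_bd|[le_ac le_bd] i k].
  split=> i j; [move: (le_ac_bd i (lshift n2 j)) | move: (le_ac_bd i (rshift n1 j))].
    by rewrite !row_mxEl.
  by rewrite !row_mxEr.
by rewrite -(splitK k); case: split => j /=; rewrite ?row_mxEl ?row_mxEr.
Qed.

Lemma companion_ge0 n (M N : 'M[R]_n) :
  mxle 0 M -> mxle 0 N -> mxle 0 (companion M N).
Proof.
move=> /mxle0E M0 /mxle0E N0; apply/mxle0E => i j.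
rewrite -(splitK i) -(splitK j).
case: (split i) => i'; case: (split j) => j' /=;
  by rewrite ?block_mxEul ?block_mxEur ?block_mxEdl ?block_mxEdr ?mxE.
Qed.

Lemma companion_subeigenvector n (M N : 'M[R]_n) :
  mxle 0 M -> mxle 0 N -> 0 < spectral_radius (companion M N) ->
  let r := spectral_radius (companion M N) in
  exists u v : 'rV[R]_n, [/\ mxle 0 u, mxle 0 v, u != 0,
    mxle (r *: u) (u *m M + v) & mxle (r *: v) (u *m N)].
Proof.
move=> M0 N0 rho_gt0 r.
have [w [w0 w_neq0 le_w]] := rho_subeigenvector (companion_ge0 M0 N0) rho_gt0.
move: w0 w_neq0 le_w; rewrite -[w]hsubmxK -/r; move: (lsubmx w) (rsubmx w) => u v.
rewrite row_mx_eq0 -[X in mxle X (row_mx _ _)]row_mx0.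
rewrite /companion mul_row_block scale_row_mx mulmx1 mulmx0 addr0.
move=> /mxle_row_mx [u0 v0] uv_neq0 /mxle_row_mx [le_u le_v].
exists u, v; split => //; apply: contraNneq uv_neq0 => u_eq0.
rewrite u_eq0 eqxx /=; apply/eqP; apply: (mxle_anti _ v0) => i j.
by move: (le_v i j); rewrite u_eq0 mul0mx !mxE pmulr_rle0.
Qed.

Lemma companion_rho_lt1 n (M N Q K : 'M[R]_n) :
  mxle 0 M -> mxle 0 N -> mxle 0 Q -> Q \in unitmx -> monotone K ->
  Q *m K = 1%:M - M - N -> spectral_radius (companion M N) < 1.
Proof.
move=> M0 N0 Q0 unitQ [unitK K0] QK; rewrite ltNge; apply/negP => rho_ge1.
have [u [v [u0 v0 u_neq0 le_u le_v]]] :=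
  companion_subeigenvector M0 N0 (lt_le_trans ltr01 rho_ge1).
set r := spectral_radius _ in rho_ge1 le_u le_v.
have u_le : mxle u (u *m M + u *m N).
  move=> i j; move: (le_u i j) (le_v i j) (u0 i j) (v0 i j); rewrite !mxE => ? ? ? ?.
  have : 0 <= (r - 1) * (u i j + v i j) by apply: mulr_ge0; lra.
  nra.
have uQ_eq0 : u *m Q = 0.
  apply: mxle_anti; last exact: mulmx_ge0.
  rewrite -(mulmxK unitK (u *m Q)); apply: mulmx_le0 K0.
  rewrite -mulmxA QK !mulmxBr mulmx1 => i j.
  by move: (u_le i j); rewrite !mxE; lra.
by move: u_neq0; rewrite -(mulmxK unitQ u) uQ_eq0 mul0mx eqxx.
Qed.

Lemma companion_rho_le n (M1 N1 M2 N2 : 'M[R]_n) :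
  mxle 0 M1 -> mxle 0 N1 -> mxle 0 M2 -> mxle 0 N2 ->
  mxle M1 M2 -> mxle (M2 + N2) (M1 + N1) ->
  spectral_radius (companion M2 N2) <= 1 ->
  spectral_radius (companion M2 N2) <= spectral_radius (companion M1 N1).
Proof.
move=> M1_0 N1_0 M2_0 N2_0 le_M le_MN.
set l := spectral_radius (companion M2 N2) => l_le1.
have [l_eq0|l_neq0] := eqVneq l 0; first by rewrite l_eq0 spectral_radius_ge0.
have l_gt0 : 0 < l by rewrite lt_def l_neq0 spectral_radius_ge0.
have [u [v [u0 v0 u_neq0 le_u le_v]]] := companion_subeigenvector M2_0 N2_0 l_gt0.
have uN1_0 : mxle 0 (u *m N1) := mulmx_ge0 u0 N1_0.
apply: (@collatz_wielandt _ _ (row_mx u (l^-1 *: (u *m N1)))).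
- exact: companion_ge0.
- rewrite -[X in mxle X _]row_mx0; apply/mxle_row_mx; split=> // i j.
  by move: (uN1_0 i j); rewrite !mxE => ?; apply: mulr_ge0; rewrite // invr_ge0 ltW.
- by rewrite row_mx_eq0 negb_and u_neq0.
rewrite /companion mul_row_block scale_row_mx mulmx1 mulmx0 addr0.
rewrite scalerA mulfV // scale1r; apply/mxle_row_mx; split=> [i j|//].
move: (le_u i j) (le_v i j) (ler_mulmx2l u0 le_M i j) (ler_mulmx2l u0 le_MN i j).
move: (u0 i j) (v0 i j) (uN1_0 i j); rewrite !mulmxDr !mxE.
set a := \sum_k u i k * M1 k j; set b := \sum_k u i k * M2 k j.
set c := \sum_k u i k * N1 k j; set d := \sum_k u i k * N2 k j.
move=> *.
have inv_ge1 : 1 <= l^-1 by rewrite invf_ge1.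
have le_v_d : v i j <= l^-1 * d.
  by rewrite -[v i j]mul1r -(mulVf l_neq0) -mulrA ler_pM2l // invr_gt0.
(* [l^-1 >= 1] and [c - d >= b - a >= 0] give [b + l^-1 d <= a + l^-1 c] *)
have : 0 <= (l^-1 - 1) * (c - d) by apply: mulr_ge0; lra.
nra.
Qed.

End NonnegativeMatrices.

Lemma mulVmx_splitting (R : comUnitRingType) n (A P Rm S : 'M[R]_n) :
  A = P - Rm + S -> P \in unitmx ->
  invmx P *m A = 1%:M - invmx P *m Rm + invmx P *m S.
Proof. by move=> -> unitP; rewrite mulmxDr mulmxBr mulVmx. Qed.

Section TwoStageSplitting.
Variables (R : realType) (n : nat) (A P1 R1 S1 P2 R2 S2 : 'M[R]_n).
Hypotheses (split1 : double_weak_regular_splitting A P1 R1 S1)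
           (split2 : double_regular_splitting A P2 R2 S2).

Local Notation a := (invmx P2 *m R2).
Local Notation b := (- (invmx P2 *m S2)).
Local Notation c := (invmx P1 *m R1).
Local Notation d := (- (invmx P1 *m S1)).

Lemma splitting_factors_ge0 : [/\ mxle 0 a, mxle 0 b, mxle 0 c & mxle 0 d].
Proof.
case: split1 split2 => _ _ _ c0 P1S1_le0 [_ _ P2inv0 R2_0 S2_le0].
split=> //; first exact: mulmx_ge0.
  by rewrite -mulmxN; apply: mulmx_ge0 (oppmx_ge0 S2_le0).
exact: oppmx_ge0.
Qed.

Lemma invP2_AhatE :
  invmx P2 *m ((1%:M - S2 *m invmx P1) *m A) = 1%:M - (a + b *m c) - b *m d.
Proof.
case: split1 split2 => eA1 unitP1 _ _ _ [eA2 unitP2 _ _ _].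
rewrite mulmxBl mul1mx mulmxBr (mulVmx_splitting eA2 unitP2).
rewrite -!mulmxA (mulVmx_splitting eA1 unitP1) !mulmxA.
rewrite !(mulmxDr, mulmxBr, mulNmx, mulmxN) !mulmxA mulmx1.
by apply/matrixP => i j; rewrite !mxE; ring.
Qed.

Lemma invP2_AcalE :
  invmx P2 *m ((1%:M + R2 *m invmx P1) *m A) = 1%:M - (a *m c + b) - a *m d.
Proof.
case: split1 split2 => eA1 unitP1 _ _ _ [eA2 unitP2 _ _ _].
rewrite mulmxDl mul1mx mulmxDr (mulVmx_splitting eA2 unitP2).
rewrite -!mulmxA (mulVmx_splitting eA1 unitP1) !mulmxA.
rewrite !(mulmxDr, mulmxBr, mulNmx, mulmxN) !mulmxA mulmx1.
by apply/matrixP => i j; rewrite !mxE; ring.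
Qed.

Lemma invP2_RhatE : invmx P2 *m (R2 - S2 *m invmx P1 *m R1) = a + b *m c.
Proof. by rewrite mulmxBr mulNmx !mulmxA. Qed.

Lemma invP2_RcalE : invmx P2 *m (R2 *m invmx P1 *m R1 - S2) = a *m c + b.
Proof. by rewrite mulmxBr !mulmxA. Qed.

Lemma hat_companionE :
  block_mx (invmx P2 *m R2 - invmx P2 *m S2 *m invmx P1 *m R1)
           (invmx P2 *m S2 *m invmx P1 *m S1) 1%:M 0
  = companion (a + b *m c) (b *m d).
Proof. by rewrite -invP2_RhatE mulmxBr mulNmx mulmxN opprK !mulmxA. Qed.

Lemma cal_companionE :
  block_mx (invmx P2 *m R2 *m invmx P1 *m R1 - invmx P2 *m S2)
           (- (invmx P2 *m R2 *m invmx P1 *m S1)) 1%:M 0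
  = companion (a *m c + b) (a *m d).
Proof. by rewrite -invP2_RcalE mulmxBr mulmxN !mulmxA. Qed.

Lemma hat_rho_lt1 : monotone ((1%:M - S2 *m invmx P1) *m A) ->
  spectral_radius (companion (a + b *m c) (b *m d)) < 1.
Proof.
have [a0 b0 c0 d0] := splitting_factors_ge0.
have [_ unitP2 P2inv0 _ _] := split2.
move=> monoAhat; apply: (companion_rho_lt1 _ _ P2inv0 _ monoAhat invP2_AhatE).
- exact: addmx_ge0 a0 (mulmx_ge0 b0 c0).
- exact: mulmx_ge0.
- by rewrite unitmx_inv.
Qed.

Lemma cal_rho_lt1 : monotone ((1%:M + R2 *m invmx P1) *m A) ->
  spectral_radius (companion (a *m c + b) (a *m d)) < 1.
Proof.
have [a0 b0 c0 d0] := splitting_factors_ge0.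
have [_ unitP2 P2inv0 _ _] := split2.
move=> monoAcal; apply: (companion_rho_lt1 _ _ P2inv0 _ monoAcal invP2_AcalE).
- exact: addmx_ge0 (mulmx_ge0 a0 c0) b0.
- exact: mulmx_ge0.
- by rewrite unitmx_inv.
Qed.

Lemma cal_rho_le_hat : monotone ((1%:M + R2 *m invmx P1) *m A) ->
  mxle (invmx P2 *m (R2 - S2 *m invmx P1 *m R1))
       (invmx P2 *m (R2 *m invmx P1 *m R1 - S2)) ->
  mxle (invmx P2 *m ((1%:M - S2 *m invmx P1) *m A))
       (invmx P2 *m ((1%:M + R2 *m invmx P1) *m A)) ->
  spectral_radius (companion (a *m c + b) (a *m d))
    <= spectral_radius (companion (a + b *m c) (b *m d)).
Proof.
have [a0 b0 c0 d0] := splitting_factors_ge0.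
move=> monoAcal le_R le_A; apply: companion_rho_le.
- exact: addmx_ge0 a0 (mulmx_ge0 b0 c0).
- exact: mulmx_ge0.
- exact: addmx_ge0 (mulmx_ge0 a0 c0) b0.
- exact: mulmx_ge0.
- by rewrite -invP2_RhatE -invP2_RcalE.
- move=> i j; move: (le_A i j); rewrite invP2_AhatE invP2_AcalE !mxE; lra.
- exact/ltW/cal_rho_lt1.
Qed.

End TwoStageSplitting.

Theorem corollary3p20 (R : realType) (n : nat)
  (A P1 R1 S1 P2 R2 S2 : 'M[R]_n) :
  monotone A ->
  double_weak_regular_splitting A P1 R1 S1 ->
  double_regular_splitting A P2 R2 S2 ->
  ~ in_spectrum (S2 *m invmx P1) 1 ->
  ~ in_spectrum (R2 *m invmx P1) (-1) ->
  let Ahat := (1%:M - S2 *m invmx P1) *m A in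
  let Acal := (1%:M + R2 *m invmx P1) *m A in
  monotone Ahat ->
  monotone Acal ->
  let Phat := P2 in
  let Pcal := P2 in
  let Rhat := R2 - S2 *m invmx P1 *m R1 in
  let Rcal := R2 *m invmx P1 *m R1 - S2 in
  mxle (invmx Phat *m Rhat) (invmx Pcal *m Rcal) ->
  mxle (invmx Phat *m Ahat) (invmx Pcal *m Acal) ->
  let W12 : 'M[R]_(n + n) :=
    block_mx (invmx P2 *m R2 - invmx P2 *m S2 *m invmx P1 *m R1)
             (invmx P2 *m S2 *m invmx P1 *m S1)
             1%:M 0 in
  let W12cal : 'M[R]_(n + n) :=
    block_mx (invmx P2 *m R2 *m invmx P1 *m R1 - invmx P2 *m S2)
             (- (invmx P2 *m R2 *m invmx P1 *m S1))
             1%:M 0 in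
  spectral_radius W12cal <= spectral_radius W12 /\ spectral_radius W12 < 1.
Proof.
(* Monotonicity of [A] and the spectral conditions only make [Ahat] and [Acal]
   invertible in the paper, which their monotonicity already asserts. *)
move=> _ split1 split2 _ _ Ahat Acal monoAhat monoAcal Phat Pcal Rhat Rcal le_R le_A.
move=> W12 W12cal; rewrite /W12 /W12cal hat_companionE cal_companionE.
split; first exact: (cal_rho_le_hat split1 split2 monoAcal le_R le_A).
exact: (hat_rho_lt1 split1 split2 monoAhat).
Qed.
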